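(* Let $d\ge 1$ and $p\in[0,1]$ with $0\le p<p_d=\frac{2d+1}{4d}$, and let $(S_n)$ be the $d$-dimensional elephant random walk with memory parameter $p$ described in the context. Then $$\lim_{n\to\infty}\frac{1}{n}S_n=0\quad\text{almost surely.}$$
   Context: Multi-dimensional elephant random walk (MERW). Fix a dimension $d\ge1$ and a memory parameter $p\in[0,1]$. Let $(e_1,\dots,e_d)$ be the standard basis of $\mathbb{R}^d$, $I_d$ the $d\times d$ identity matrix, and $J_d$ the $d\times d$ cyclic permutation matrix with entries $(J_d)_{i,i+1}=1$ for $1\le i\le d-1$, $(J_d)_{d,1}=1$, and all other entries $0$ (so $J_d^d=I_d$). Set $S_0=0$. The first step $X_1$ is uniformly distributed on the $2d$ vectors $\{\pm e_1,\dots,\pm e_d\}$. For $n\ge1$, given $\mathcal{F}_n=\sigma(X_1,\dots,X_n)$, the next step is $X_{n+1}=A_nX_{b_n}$, where $b_n$ is uniformly distributed on $\{1,\dots,n\}$, and $A_n$ is a random matrix, with $b_n$ and $A_n$ independent of each other and of $\mathcal{F}_n$, taking the value $I_d$ with probability $p$ and each of the $2d-1$ values $-I_d,\ \pm J_d,\ \pm J_d^2,\dots,\pm J_d^{d-1}$ with probability $\frac{1-p}{2d-1}$. The position is $S_n=X_1+\dots+X_n$. Define $a=\frac{2dp-1}{2d-1}$; note $p<p_d$ iff $a<1/2$. *)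

From HB Require Import structures.
From mathcomp Require Import all_boot all_order all_algebra.
From mathcomp Require Import all_classical all_reals all_analysis.
Set Implicit Arguments. Unset Strict Implicit. Unset Printing Implicit Defensive.
Import Order.TTheory GRing.Theory Num.Theory.
Import numFieldNormedType.Exports.
Local Open Scope ring_scope.
Local Open Scope classical_set_scope.

(* Multi-dimensional elephant random walk, specified through the joint law
   of its steps X_1, ..., X_n (indexed from 1; X 0 is unused). *)

Section MERW.
Variables (R : realType) (d : nat) (p : R).

Definition Jmat : 'M[R]_d := \matrix_(i < d, j < d) (((i.+1 %% d)%N == j)%:R).

Definition Jpow (k : nat) : 'M[R]_d := iter k (mulmx Jmat) 1%:M.

Definition evec (i : 'I_d) : 'cV[R]_d := \col_(j < d) ((j == i)%:R).

Definition is_step (x : 'cV[R]_d) : bool :=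
  [exists i : 'I_d, (x == evec i) || (x == - evec i)].

(* probability that A x = y, where A = I w.p. p and each of
   -I, +-J, ..., +-J^(d-1) w.p. (1-p)/(2d-1) *)
Definition qtrans (x y : 'cV[R]_d) : R :=
  p * (x == y)%:R +
  (1 - p) / (2 * d%:R - 1) *
    ((- x == y)%:R +
     \sum_(1 <= k < d) ((Jpow k *m x == y)%:R + (- (Jpow k *m x) == y)%:R)).

(* mu n x = P(X_1 = x 1, ..., X_n = x n) *)
Fixpoint merw_law (n : nat) (x : nat -> 'cV[R]_d) : R :=
  match n with
  | 0 => 1
  | 1 => (is_step (x 1%N))%:R / (2 * d%:R)
  | m.+1 => merw_law m x * (m%:R)^-1 *
              \sum_(1 <= k < m.+1) qtrans (x k) (x m.+1)
  end.

End MERW.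

Definition is_MERW (R : realType) (d : nat) (p : R)
  (dd : measure_display) (Omega : measurableType dd) (P : probability Omega R)
  (X : nat -> Omega -> 'cV[R]_d) : Prop :=
  (forall n x, measurable (X n @^-1` [set x])) /\
  (forall (n : nat) (x : nat -> 'cV[R]_d), (1 <= n)%N ->
     P [set w : Omega | forall k : nat, (1 <= k <= n)%N -> X k w = x k]
     = (merw_law p n x)%:E).

Definition Spos (R : realType) (d : nat) (Omega : Type)
  (X : nat -> Omega -> 'cV[R]_d) (n : nat) (w : Omega) : 'cV[R]_d :=
  \sum_(1 <= k < n.+1) X k w.

From HB Require Import structures.
From mathcomp Require Import all_boot all_order all_algebra.
From mathcomp Require Import all_classical all_reals all_analysis.
From mathcomp Require Import ring lra zify.
Import Order.TTheory GRing.Theory Num.Theory.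
Import numFieldNormedType.Exports.
Local Open Scope ring_scope.
Local Open Scope classical_set_scope.
Set Implicit Arguments. Unset Strict Implicit. Unset Printing Implicit Defensive.

(* The conditional mean of the next step is linear in the position,
   E[X_{n+1} | F_n] = a S_n / n, and every step is a unit vector, so
   E|S_{n+1}|^2 <= (1 + 2a/n) E|S_n|^2 + d.  When 2a < 1, i.e. p < p_d, this
   recursion gives E|S_n|^2 = O(n).  By Chebyshev's inequality the events
   |S_n|_oo > n/(j+1) have summable probabilities along n = (m+1)(m+2), so by
   Borel-Cantelli S_n/n -> 0 a.s. along this subsequence; since
   |S_{n+1} - S_n| <= 1 and consecutive terms of the subsequence are O(sqrt n)
   apart, the whole sequence follows.  The law of the first n steps lives on the
   finite set [walks n] of sequences of n unit steps, so every expectation is a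
   finite sum over walks. *)

Section UnitSteps.
Variables (R : realType) (d : nat).

Definition unit_step (t : 'I_d * bool) : 'cV[R]_d :=
  if t.2 then evec R t.1 else - evec R t.1.

Definition steps : seq 'cV[R]_d := map unit_step (enum {: 'I_d * bool}).

Lemma unit_stepE t j : unit_step t j ord0 = (if t.2 then 1 else -1) * (j == t.1)%:R.
Proof. by case: t => i [] /=; rewrite !mxE ?mul1r ?mulN1r. Qed.

Lemma unit_step_inj : injective unit_step.
Proof.
move=> [i b] [j c] /(congr1 (fun v : 'cV[R]_d => v i ord0)).
rewrite !unit_stepE /= eqxx mulr1.
have [<-|_] := eqVneq i j; rewrite ?mulr1 ?mulr0.
  by case: b; case: c => //= E; exfalso; lra.
by case: b => E; exfalso; lra.
Qed.

Lemma uniq_steps : uniq steps.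
Proof. by rewrite (map_inj_uniq unit_step_inj) enum_uniq. Qed.

Lemma size_steps : size steps = (2 * d)%N.
Proof. by rewrite size_map -cardE card_prod card_ord card_bool mulnC. Qed.

Lemma stepsP v : reflect (exists t, v = unit_step t) (v \in steps).
Proof.
by apply: (iffP mapP) => [[t _ ->]|[t ->]]; exists t; rewrite ?mem_enum.
Qed.

Lemma steps_is_step v : v \in steps -> is_step v.
Proof.
by case/stepsP => -[i b] ->; apply/existsP; exists i; case: b; rewrite eqxx ?orbT.
Qed.

Lemma oppr_steps v : v \in steps -> - v \in steps.
Proof.
by case/stepsP => -[i b] ->; apply/stepsP; exists (i, ~~ b); case: b; rewrite /= ?opprK.
Qed.

Lemma Jmat_evec i : Jmat R d *m evec R i = evec R (ord_pred i).
Proof.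
apply/matrixP => r z; rewrite (ord1 z) !mxE (bigD1 i) //= big1 => [|j /negbTE ji].
  by rewrite !mxE eqxx mulr1 addr0 -(can2_eq (@ordSK d) (@ord_predK d)).
by rewrite !mxE ji mulr0.
Qed.

Lemma Jpow_evec k i : Jpow R d k *m evec R i = evec R (iter k (@ord_pred d) i).
Proof.
elim: k => [|k IHk]; first by rewrite mul1mx.
by rewrite [Jpow R d k.+1]/= -mulmxA IHk Jmat_evec.
Qed.

Lemma Jpow_steps k v : v \in steps -> Jpow R d k *m v \in steps.
Proof.
case/stepsP => -[i b] ->; apply/stepsP; exists (iter k (@ord_pred d) i, b).
by case: b; rewrite /unit_step /= ?mulmxN Jpow_evec.
Qed.

Lemma norm_steps_le1 v i : v \in steps -> `|v i ord0| <= 1.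
Proof.
by case/stepsP => t ->; rewrite unit_stepE normrM; case: t.2; case: (i == _);
  rewrite ?normrN normr1 ?normr0 ?mul1r.
Qed.

Lemma sum_steps_eq v (g : 'cV[R]_d -> R) : v \in steps ->
  \sum_(s <- steps) (v == s)%:R * g s = g v.
Proof.
move=> v_step; rewrite (bigD1_seq v) ?uniq_steps //= eqxx mul1r big1 ?addr0 //.
by move=> s /negbTE; rewrite eq_sym => ->; rewrite mul0r.
Qed.

End UnitSteps.

Section Kernel.
Variables (R : realType) (d : nat) (p : R).

Definition other_weight : R := (1 - p) / (2 * d%:R - 1).

(* The paper's a = (2dp-1)/(2d-1). *)
Definition drift : R := p - other_weight.

Lemma sum_qtrans_steps v (g : 'cV[R]_d -> R) : v \in steps R d ->
  \sum_(s <- steps R d) qtrans p v s * g s =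
  p * g v + other_weight * (g (- v) + \sum_(1 <= k < d)
     (g (Jpow R d k *m v) + g (- (Jpow R d k *m v)))).
Proof.
move=> v_step.
rewrite -(sum_steps_eq g v_step) -(sum_steps_eq g (oppr_steps v_step)).
under [X in _ = _ + _ * (_ + X)]eq_bigr => k _ do
  rewrite -(sum_steps_eq g (Jpow_steps k v_step))
          -(sum_steps_eq g (oppr_steps (Jpow_steps k v_step))) -big_split /=.
rewrite exchange_big /= -big_split /= !mulr_sumr -big_split /=.
apply: eq_bigr => s _; rewrite /qtrans /other_weight.
under [in RHS]eq_bigr do rewrite -mulrDl.
rewrite -mulr_suml; ring.
Qed.

Lemma sum_qtrans_steps_coord v i : v \in steps R d ->
  \sum_(s <- steps R d) qtrans p v s * s i ord0 = drift * v i ord0.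
Proof.
move=> v_step; rewrite (sum_qtrans_steps (fun s => s i ord0)) // big1 => [|k _].
  by rewrite mxE addr0 /drift; ring.
by rewrite !mxE addrN.
Qed.

Hypotheses (d_gt0 : (0 < d)%N) (p_ge0 : 0 <= p) (p_le1 : p <= 1).

Lemma other_weight_ge0 : 0 <= other_weight.
Proof.
have d_ge1 : 1 <= d%:R :> R by rewrite ler1n.
by rewrite divr_ge0 ?subr_ge0 //; lra.
Qed.

Lemma qtrans_ge0 (v w : 'cV[R]_d) : 0 <= qtrans p v w.
Proof.
apply: addr_ge0; first by rewrite mulr_ge0 ?ler0n.
apply: mulr_ge0; first exact: other_weight_ge0.
by rewrite addr_ge0 ?ler0n ?sumr_ge0 // => k _; rewrite addr_ge0 ?ler0n.
Qed.

Lemma sum_qtrans_steps1 v : v \in steps R d -> \sum_(s <- steps R d) qtrans p v s = 1.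
Proof.
move=> v_step; have := sum_qtrans_steps (fun=> 1) v_step.
under eq_bigr do rewrite mulr1.
move=> ->; rewrite sumr_const_nat -[(1 + 1) *+ _]mulr_natl natrB // /other_weight.
have d_ge1 : 1 <= d%:R :> R by rewrite ler1n.
by field; lra.
Qed.

Lemma sum_qtrans_steps_sqr v i (z : R) : v \in steps R d ->
  \sum_(s <- steps R d) qtrans p v s * (z + s i ord0) ^+ 2 <=
  z ^+ 2 + 2 * drift * z * v i ord0 + 1.
Proof.
move=> v_step.
have -> : \sum_(s <- steps R d) qtrans p v s * (z + s i ord0) ^+ 2 =
    z ^+ 2 * (\sum_(s <- steps R d) qtrans p v s) +
    2 * z * (\sum_(s <- steps R d) qtrans p v s * s i ord0) +
    \sum_(s <- steps R d) qtrans p v s * s i ord0 ^+ 2.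
  by rewrite !mulr_sumr -!big_split /=; apply: eq_bigr => s _; ring.
rewrite sum_qtrans_steps1 // sum_qtrans_steps_coord //.
have -> : z ^+ 2 * 1 + 2 * z * (drift * v i ord0) = z ^+ 2 + 2 * drift * z * v i ord0
  by ring.
rewrite lerD2l -[leRHS](sum_qtrans_steps1 v_step) big_seq [leRHS]big_seq.
apply: ler_sum => s s_step; rewrite ler_piMr ?qtrans_ge0 //.
by rewrite -real_normK ?num_real // exprn_ile1 ?norm_steps_le1.
Qed.

Lemma drift_lt_half : p < (2 * d%:R + 1) / (4 * d%:R) -> 2 * drift < 1.
Proof.
have d_ge1 : 1 <= d%:R :> R by rewrite ler1n.
rewrite ltr_pdivlMr; last lra.
move=> p_lt; rewrite -subr_gt0.
have -> : 1 - 2 * drift = (2 * d%:R + 1 - 4 * d%:R * p) / (2 * d%:R - 1).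
  by rewrite /drift /other_weight; field; lra.
by apply: divr_gt0; lra.
Qed.

End Kernel.

Lemma sumr_const_seq (V : nmodType) (T : Type) (r : seq T) (x : V) :
  \sum_(i <- r) x = x *+ size r.
Proof. by rewrite big_const_seq count_predT; elim: (size r) => //= n ->; rewrite mulrS. Qed.

Lemma linear_growth_of_recursion (R : realFieldType) (u : nat -> R) (b c : R) :
  b < 1 -> 0 <= c -> (forall n, 0 <= u n) -> u 1 <= c ->
  (forall n, (0 < n)%N -> u n.+1 <= u n * (1 + b / n%:R) + c) ->
  forall n, (0 < n)%N -> u n <= c * (1 + (1 - b)^-1) * n%:R.
Proof.
move=> b_lt1 c_ge0 u_ge0 u1 uS; set K := c * _.
have inv_gt0 : 0 < (1 - b)^-1 by rewrite invr_gt0 subr_gt0.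
have c_le_K : c <= K by rewrite /K ler_peMr // lerDl ltW.
have KE : K * (1 - b) = c * (1 - b) + c by rewrite /K; field; lra.
elim=> [//|[|n] IHn] _; first by rewrite mulr1 (le_trans u1).
apply: le_trans (uS n.+1 isT) _; have := IHn isT; set f := 1 + b / n.+1%:R.
have n_gt0 : 0 < n.+1%:R :> R by rewrite ltr0n.
have -> : n.+2%:R = n.+1%:R + 1 :> R by rewrite -natr1.
have [f_ge0 un_le|f_lt0 _] := leP 0 f.
  have : u n.+1 * f <= K * n.+1%:R * f by rewrite ler_wpM2r.
  have -> : K * n.+1%:R * f = K * n.+1%:R + b * K by rewrite /f; field; lra.
  nra.
have : u n.+1 * f <= 0 by rewrite mulr_ge0_le0 // ltW.
have : c <= K * n.+1%:R by rewrite (le_trans c_le_K) // ler_peMr ?ler1n ?(le_trans c_ge0).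
nra.
Qed.

Section WalkLaw.
Variables (R : realType) (d : nat) (p : R).

Fixpoint walks (n : nat) : seq (seq 'cV[R]_d) :=
  if n is m.+1 then [seq rcons c s | c <- walks m, s <- steps R d] else [:: [::]].

Lemma mem_walks n c : (c \in walks n) = (size c == n) && all (mem (steps R d)) c.
Proof.
elim: n c => [|n IHn] c; first by case: c.
apply/allpairsPdep/andP => [[c' [s [c'_walk s_step ->]]]|[]].
  by move: c'_walk; rewrite IHn size_rcons all_rcons => /andP[/eqP-> ->]; rewrite andbT.
case/lastP: c => [//|c s]; rewrite size_rcons all_rcons eqSS => size_c /andP[s_step c_steps].
by exists c, s; rewrite IHn size_c c_steps.
Qed.

Lemma size_walks n c : c \in walks n -> size c = n.
Proof. by rewrite mem_walks => /andP[/eqP]. Qed.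

Lemma uniq_walks n : uniq (walks n).
Proof.
elim: n => [//|n IHn]; apply: allpairs_uniq => //; first exact: uniq_steps.
by move=> [c s] [c' s'] _ _ /rcons_inj [-> ->].
Qed.

Lemma big_walksS (F : seq 'cV[R]_d -> R) n :
  \sum_(c <- walks n.+1) F c = \sum_(c <- walks n) \sum_(s <- steps R d) F (rcons c s).
Proof. exact: big_allpairs_dep. Qed.

(* Steps are numbered from 1, as in [merw_law]; index 0 is a dummy. *)
Definition walk_step (c : seq 'cV[R]_d) (k : nat) : 'cV[R]_d := nth 0 (0 :: c) k.

Definition walk_prob (c : seq 'cV[R]_d) : R := merw_law p (size c) (walk_step c).

Definition walk_end (c : seq 'cV[R]_d) : 'cV[R]_d := \sum_(s <- c) s.

Lemma merw_lawSS n (x : nat -> 'cV[R]_d) : merw_law p n.+2 x =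
  merw_law p n.+1 x * (n.+1%:R)^-1 * \sum_(1 <= k < n.+2) qtrans p (x k) (x n.+2).
Proof. by []. Qed.

Lemma merw_law_local n (x y : nat -> 'cV[R]_d) :
  (forall k, (1 <= k <= n)%N -> x k = y k) -> merw_law p n x = merw_law p n y.
Proof.
elim: n => [|[|n] IHn] xy; [by [] | by rewrite /= xy |].
rewrite (merw_lawSS n x) (merw_lawSS n y) IHn => [|k k_le]; last by apply: xy; lia.
congr (_ * _); apply: eq_big_nat => k k_lt.
by rewrite !xy //; lia.
Qed.

Lemma sum_walk_step (F : 'cV[R]_d -> R) c :
  \sum_(1 <= k < (size c).+1) F (walk_step c k) = \sum_(s <- c) F s.
Proof. by rewrite big_add1 /= [RHS](big_nth 0). Qed.

Lemma walk_step_rcons c s k : (k <= size c)%N -> walk_step (rcons c s) k = walk_step c k.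
Proof. by move=> k_le; rewrite /walk_step -rcons_cons nth_rcons /= ltnS k_le. Qed.

Lemma walk_step_rcons_last c s : walk_step (rcons c s) (size c).+1 = s.
Proof. by rewrite /walk_step -rcons_cons nth_rcons /= ltnn eqxx. Qed.

Lemma walk_prob_rcons c s : (0 < size c)%N ->
  walk_prob (rcons c s) = walk_prob c / (size c)%:R * \sum_(v <- c) qtrans p v s.
Proof.
move=> c_gt0; rewrite /walk_prob size_rcons -(prednK c_gt0) (merw_lawSS (size c).-1) prednK //.
rewrite (@merw_law_local (size c) _ (walk_step c)) => [|k /andP[_ k_le]]; last first.
  exact: walk_step_rcons.
rewrite walk_step_rcons_last -sum_walk_step; congr (_ * _).
by apply: eq_big_nat => k /andP[_ k_lt]; rewrite walk_step_rcons.
Qed.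

Lemma walk_end_rcons c s : walk_end (rcons c s) = walk_end c + s.
Proof. by rewrite /walk_end big_rcons. Qed.

Definition sqnorm (v : 'cV[R]_d) : R := \sum_i v i ord0 ^+ 2.

Definition second_moment (n : nat) : R :=
  \sum_(c <- walks n) walk_prob c * sqnorm (walk_end c).

Lemma sqnorm_ge0 (v : 'cV[R]_d) : 0 <= sqnorm v.
Proof. by rewrite sumr_ge0 // => i _; rewrite sqr_ge0. Qed.

Lemma sqr_le_sqnorm (v : 'cV[R]_d) i : v i ord0 ^+ 2 <= sqnorm v.
Proof. by rewrite /sqnorm (bigD1 i) //= lerDl sumr_ge0 // => k _; rewrite sqr_ge0. Qed.

Definition ends_far (j n : nat) (c : seq 'cV[R]_d) : bool :=
  [exists i, n%:R < j.+1%:R * `|walk_end c i ord0|].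

Hypotheses (d_gt0 : (0 < d)%N) (p_ge0 : 0 <= p) (p_le1 : p <= 1).

Lemma merw_law_ge0 n (x : nat -> 'cV[R]_d) : 0 <= merw_law p n x.
Proof.
elim: n => [|[|n] IHn] //; first by rewrite divr_ge0 ?mulr_ge0 ?ler0n.
rewrite (merw_lawSS n x) !mulr_ge0 ?invr_ge0 ?ler0n //.
by rewrite sumr_ge0 // => k _; exact: qtrans_ge0.
Qed.

Lemma sum_walk_prob_rcons c : all (mem (steps R d)) c -> (0 < size c)%N ->
  \sum_(s <- steps R d) walk_prob (rcons c s) = walk_prob c.
Proof.
move=> c_steps c_gt0; under eq_bigr do rewrite walk_prob_rcons //.
rewrite -mulr_sumr exchange_big /= big_seq (eq_bigr (fun=> 1)) => [|v v_c]; last first.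
  exact/sum_qtrans_steps1/(allP c_steps).
by rewrite -big_seq sumr_const_seq divfK // pnatr_eq0 -lt0n.
Qed.

Lemma sum_walk_prob n : (0 < n)%N -> \sum_(c <- walks n) walk_prob c = 1.
Proof.
elim: n => [|[|n] IHn] // _.
  rewrite big_walksS big_seq1 big_seq (eq_bigr (fun=> (2 * d%:R)^-1)) => [|s s_step].
    rewrite -big_seq sumr_const_seq size_steps -[_ *+ _]mulr_natr natrM.
    by rewrite mulVf // mulf_neq0 // pnatr_eq0 -lt0n.
  by rewrite /walk_prob /= /walk_step /= steps_is_step // mul1r.
rewrite big_walksS -IHn // !big_seq; apply: eq_bigr => c.
by rewrite mem_walks => /andP[/eqP size_c c_steps]; rewrite sum_walk_prob_rcons ?size_c.
Qed.

Lemma sum_second_moment_rcons c : all (mem (steps R d)) c -> (0 < size c)%N ->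
  \sum_(s <- steps R d) walk_prob (rcons c s) * sqnorm (walk_end (rcons c s)) <=
  walk_prob c * (sqnorm (walk_end c) * (1 + 2 * drift d p / (size c)%:R) + d%:R).
Proof.
move=> c_steps c_gt0; set n := size c; set S := walk_end c.
have n_neq0 : n%:R != 0 :> R by rewrite pnatr_eq0 -lt0n.
have -> : \sum_(s <- steps R d) walk_prob (rcons c s) * sqnorm (walk_end (rcons c s)) =
    walk_prob c / n%:R * \sum_(v <- c) \sum_i
      \sum_(s <- steps R d) qtrans p v s * (S i ord0 + s i ord0) ^+ 2.
  under eq_bigr do rewrite walk_prob_rcons // walk_end_rcons -mulrA mulr_suml.
  rewrite -mulr_sumr exchange_big /=; congr (_ * _); apply: eq_bigr => v _.
  rewrite exchange_big /=; apply: eq_bigr => s _.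
  by rewrite mulr_sumr; apply: eq_bigr => i _; rewrite mxE.
have -> : walk_prob c * (sqnorm S * (1 + 2 * drift d p / n%:R) + d%:R) =
    walk_prob c / n%:R *
    \sum_(v <- c) \sum_i (S i ord0 ^+ 2 + 2 * drift d p * S i ord0 * v i ord0 + 1).
  rewrite exchange_big /= (eq_bigr (fun i => (n%:R + 2 * drift d p) * S i ord0 ^+ 2 + n%:R));
    last by move=> i _; rewrite !big_split /= !sumr_const_seq -mulr_sumr -summxE; ring.
  by rewrite big_split /= -mulr_sumr sumr_const card_ord -/(sqnorm S); field.
rewrite ler_wpM2l ?divr_ge0 ?merw_law_ge0 ?ler0n // big_seq [leRHS]big_seq.
apply: ler_sum => v v_c; apply: ler_sum => i _.
exact/sum_qtrans_steps_sqr/(allP c_steps).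
Qed.

Lemma sqnorm_steps_le v : v \in steps R d -> sqnorm v <= d%:R.
Proof.
move=> v_step; rewrite -[d in d%:R]card_ord -sumr_const ler_sum // => i _.
by rewrite -real_normK ?num_real // exprn_ile1 ?norm_steps_le1.
Qed.

Lemma second_moment1 : second_moment 1 <= d%:R.
Proof.
rewrite /second_moment big_walksS big_seq1.
apply: (@le_trans _ _ (\sum_(s <- steps R d) walk_prob (rcons [::] s) * d%:R)).
  rewrite !big_seq ler_sum // => s s_step; rewrite ler_wpM2l ?merw_law_ge0 //.
  by rewrite /walk_end big_seq1 sqnorm_steps_le.
have total : \sum_(s <- steps R d) walk_prob (rcons [::] s) = 1.
  by rewrite -(@sum_walk_prob 1) // big_walksS big_seq1.
by rewrite -mulr_suml total mul1r.
Qed.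

Lemma second_momentS n : (0 < n)%N ->
  second_moment n.+1 <= second_moment n * (1 + 2 * drift d p / n%:R) + d%:R.
Proof.
move=> n_gt0; apply: (@le_trans _ _ (second_moment n * (1 + 2 * drift d p / n%:R) +
    d%:R * \sum_(c <- walks n) walk_prob c)); last by rewrite sum_walk_prob // mulr1.
rewrite /second_moment big_walksS mulr_suml mulr_sumr -big_split /= !big_seq.
apply: ler_sum => c; rewrite mem_walks => /andP[/eqP size_c c_steps].
by have := sum_second_moment_rcons c_steps; rewrite size_c mulrDr mulrA [_ * d%:R]mulrC; apply.
Qed.

Hypothesis drift_lt : 2 * drift d p < 1.

Definition moment_const : R := d%:R * (1 + (1 - 2 * drift d p)^-1).

Lemma second_moment_le n : (0 < n)%N -> second_moment n <= moment_const * n%:R.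
Proof.
move: n; apply: (linear_growth_of_recursion drift_lt (ler0n _ _) _ second_moment1 second_momentS).
by move=> m; rewrite sumr_ge0 // => c _; rewrite mulr_ge0 ?merw_law_ge0 ?sqnorm_ge0.
Qed.

Lemma sum_walk_prob_ends_far j n : (0 < n)%N ->
  \sum_(c <- walks n | ends_far j n c) walk_prob c <= j.+1%:R ^+ 2 * moment_const / n%:R.
Proof.
move=> n_gt0; have n_pos : 0 < n%:R :> R by rewrite ltr0n.
have -> : j.+1%:R ^+ 2 * moment_const / n%:R =
    j.+1%:R ^+ 2 / n%:R ^+ 2 * (moment_const * n%:R) by field; lra.
apply: le_trans (ler_wpM2l _ (second_moment_le n_gt0)); last by rewrite divr_ge0 ?sqr_ge0.
rewrite /second_moment mulr_sumr big_mkcond /= ler_sum // => c _.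
case: ifP => [/existsP[i far_i]|_]; last first.
  by rewrite !mulr_ge0 ?invr_ge0 ?sqr_ge0 ?merw_law_ge0 ?sqnorm_ge0.
have far_sq : n%:R ^+ 2 <= j.+1%:R ^+ 2 * sqnorm (walk_end c).
  apply: (@le_trans _ _ ((j.+1%:R * `|walk_end c i ord0|) ^+ 2)).
    by rewrite lerXn2r ?nnegrE ?mulr_ge0 ?ler0n // ltW.
  by rewrite exprMn real_normK ?num_real // ler_wpM2l ?sqr_ge0 ?sqr_le_sqnorm.
by rewrite mulrCA ler_peMr ?merw_law_ge0 // mulrAC ler_pdivlMr ?exprn_gt0 // mul1r.
Qed.

End WalkLaw.

Definition pronic (m : nat) : nat := (m.+1 * m.+2)%N.

Lemma pronic_bracket m0 n : (pronic m0 <= n)%N ->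
  exists2 m, (m0 <= m)%N & (pronic m <= n < pronic m.+1)%N.
Proof.
move=> m0_le; have ub i : (pronic i <= n)%N -> (i <= n)%N by rewrite /pronic; nia.
case: (ex_maxnP (ex_intro (fun i => pronic i <= n)%N m0 m0_le) ub) => m m_le m_max.
exists m; first exact: m_max.
by rewrite m_le ltnNge; apply/negP => /m_max; rewrite ltnn.
Qed.

Lemma lipschitz_dist (R : realDomainType) (s : nat -> R) :
  (forall n, `|s n.+1 - s n| <= 1) -> forall a k, `|s (k + a)%N - s a| <= k%:R.
Proof.
move=> s1 a; elim=> [|k IHk]; first by rewrite add0n subrr normr0.
rewrite addSn (_ : _ - _ = (s (k + a).+1 - s (k + a)) + (s (k + a) - s a)); last by ring.
by rewrite (le_trans (ler_normD _ _)) // -natr1 addrC lerD.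
Qed.

Lemma cvg_div0_of_pronic (R : realType) (s : nat -> R) :
  (forall n, `|s n.+1 - s n| <= 1) ->
  (forall j, \forall m \near \oo, j.+1%:R * `|s (pronic m)| <= (pronic m)%:R) ->
  (fun n => s n / n%:R) @ \oo --> 0.
Proof.
move=> s1 s_small; apply/cvgrPdist_le => e e_gt0.
set J := Num.Def.archi_bound (4 / e).
have eJ : 4 < e * J.+1%:R.
  have : 4 / e < J%:R by apply: archi_boundP; rewrite divr_ge0 // ltW.
  by rewrite ltr_pdivrMr // -natr1; nra.
have [M _ M_small] := s_small J.
exists (pronic (maxn M J)) => // n /= n_ge.
have [m] := pronic_bracket n_ge; rewrite geq_max => /andP[M_le J_le] /andP[m_le n_lt].
have n_pos : 0 < n%:R :> R by rewrite ltr0n (leq_trans _ m_le).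
rewrite sub0r normrN normrM normfV normr_nat ler_pdivrMr //.
have A_small : J.+1%:R * `|s (pronic m)| <= (pronic m)%:R := M_small m M_le.
have gap : `|s n - s (pronic m)| <= (n - pronic m)%:R.
  by have := lipschitz_dist s1 (pronic m) (n - pronic m); rewrite subnK.
have gap_le : (n - pronic m)%:R <= 2 * m.+2%:R :> R.
  by rewrite -natrM ler_nat; move: n_lt; rewrite /pronic; lia.
have m_sq : m.+1%:R * m.+2%:R <= n%:R :> R by rewrite -natrM ler_nat.
have J_le_m : J.+1%:R <= m.+1%:R :> R by rewrite ler_nat.
have pronic_le : (pronic m)%:R <= n%:R :> R by rewrite ler_nat.
have sn_le : `|s n| <= `|s (pronic m)| + `|s n - s (pronic m)|.
  by rewrite -[X in `|X| <= _](subrK (s (pronic m))) addrC ler_normD.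
have J_pos : 0 < J.+1%:R :> R by rewrite ltr0n.
have gap_J : (n - pronic m)%:R * J.+1%:R <= 2 * n%:R :> R.
  have : 0 <= m.+2%:R :> R by rewrite ler0n.
  nra.
(* (J+1)|s n| <= pronic m + (J+1)(n - pronic m) <= 3n < e n (J+1) *)
have : `|s n| * J.+1%:R <= 3 * n%:R by nra.
nra.
Qed.

Lemma sum_inv_pronic (R : realFieldType) N :
  \sum_(0 <= m < N) ((pronic m)%:R : R)^-1 = 1 - (N.+1%:R)^-1.
Proof.
elim: N => [|N IHN]; first by rewrite big_geq // invr1 subrr.
rewrite big_nat_recr //= IHN /pronic natrM.
by field; apply/andP; split; apply/eqP; have := ler0n R N; lra.
Qed.

Section Cylinders.
Variables (R : realType) (d : nat) (p : R) (dd : measure_display)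
  (Omega : measurableType dd) (P : probability Omega R) (X : nat -> Omega -> 'cV[R]_d).
Hypothesis X_merw : is_MERW p P X.

Definition cylinder (c : seq 'cV[R]_d) : set Omega :=
  [set w | forall k, (1 <= k <= size c)%N -> X k w = walk_step c k].

Definition first_steps (n : nat) (w : Omega) : seq 'cV[R]_d := [seq X k w | k <- iota 1 n].

Definition first_steps_in (n : nat) (s : seq (seq 'cV[R]_d)) : set Omega :=
  [set w | first_steps n w \in s].

Lemma cylinderP c w : cylinder c w <-> first_steps (size c) w = c.
Proof.
split=> [cw|<- k /andP[k_ge1 k_le]].
  apply: (@eq_from_nth _ 0); first by rewrite size_map size_iota.
  move=> i; rewrite size_map size_iota => i_lt.
  by rewrite (nth_map 0) ?size_iota // nth_iota // add1n cw.
rewrite size_map size_iota in k_le.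
by rewrite /walk_step -(prednK k_ge1) /= (nth_map 0) ?size_iota ?nth_iota ?add1n // -ltnS prednK.
Qed.

Lemma measurable_cylinder c : measurable (cylinder c).
Proof.
have -> : cylinder c = \bigcap_(k in [set k | (1 <= k <= size c)%N])
    X k @^-1` [set walk_step c k] by apply/seteqP; split=> w.
by apply: bigcap_measurableType => k _; exact: X_merw.1.
Qed.

Lemma P_cylinder c : (0 < size c)%N -> P (cylinder c) = (walk_prob p c)%:E.
Proof. exact: X_merw.2. Qed.

Lemma first_steps_in_cons n c s : size c = n ->
  first_steps_in n (c :: s) = cylinder c `|` first_steps_in n s.
Proof.
move=> <-; apply/seteqP; split=> w; rewrite /first_steps_in /= inE.
  by case/orP => [/eqP/cylinderP|]; [left|right].
by case=> [/cylinderP ->|->]; rewrite ?eqxx ?orbT.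
Qed.

Lemma first_steps_in_nil n : first_steps_in n [::] = set0.
Proof. by apply/seteqP; split=> w. Qed.

Lemma measurable_first_steps_in n s : all (fun c => size c == n) s ->
  measurable (first_steps_in n s).
Proof.
elim: s => [|c s IHs]; first by rewrite first_steps_in_nil.
case/andP => /eqP size_c s_n; rewrite first_steps_in_cons //.
exact: measurableU (measurable_cylinder c) (IHs s_n).
Qed.

Lemma P_first_steps_in n s : (0 < n)%N -> uniq s -> all (fun c => size c == n) s ->
  P (first_steps_in n s) = (\sum_(c <- s) walk_prob p c)%:E.
Proof.
move=> n_gt0; elim: s => [|c s IHs]; first by rewrite first_steps_in_nil measure0 big_nil.
case/andP => c_notin s_uniq /andP[/eqP size_c s_n].
rewrite first_steps_in_cons // big_cons EFinD -P_cylinder ?size_c // -IHs //.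
rewrite measureU //; [exact: measurable_cylinder | exact: measurable_first_steps_in |].
apply/seteqP; split=> // w [/cylinderP]; rewrite size_c /first_steps_in /= => -> c_in.
by rewrite c_in in c_notin.
Qed.

Lemma first_steps_walks w n : (forall k, X k.+1 w \in steps R d) ->
  first_steps n w \in walks R d n.
Proof.
move=> X_steps; rewrite mem_walks size_map size_iota eqxx; apply/allP => v /mapP[k].
by rewrite mem_iota => /andP[k_ge1 _] ->; rewrite -(prednK k_ge1); apply: X_steps.
Qed.

Lemma Spos_first_steps n w : Spos X n w = walk_end (first_steps n w).
Proof. by rewrite /walk_end big_map /Spos /index_iota subSS subn0. Qed.

Definition far_event (j m : nat) : set Omega :=
  first_steps_in (pronic m) [seq c <- walks R d (pronic m) | ends_far j (pronic m) c].

Lemma measurable_far_event j m : measurable (far_event j m).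
Proof.
apply: measurable_first_steps_in; apply/allP => c.
by rewrite mem_filter => /andP[_ /size_walks ->].
Qed.

Lemma not_far_event_le w j m i : (forall k, X k.+1 w \in steps R d) -> ~ far_event j m w ->
  j.+1%:R * `|Spos X (pronic m) w i ord0| <= (pronic m)%:R.
Proof.
move=> X_steps not_far; rewrite Spos_first_steps leNgt.
apply: contra_notN not_far => far.
rewrite /far_event /first_steps_in /= mem_filter first_steps_walks // andbT.
by apply/existsP; exists i.
Qed.

Hypotheses (d_gt0 : (0 < d)%N) (p_ge0 : 0 <= p) (p_le1 : p <= 1).

Lemma ae_first_steps_walks n : {ae P, forall w, first_steps n.+1 w \in walks R d n.+1}.
Proof.
have walks_n : all (fun c => size c == n.+1) (walks R d n.+1).
  by apply/allP => c /size_walks ->.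
have meas := measurable_first_steps_in walks_n.
exists (~` first_steps_in n.+1 (walks R d n.+1)); split => //; first exact: measurableC.
rewrite probability_setC // P_first_steps_in ?uniq_walks //.
by rewrite (sum_walk_prob p d_gt0) // subee.
Qed.

Lemma ae_steps : {ae P, forall w k, X k.+1 w \in steps R d}.
Proof.
apply: ae_foralln => k; apply: filterS (ae_first_steps_walks k) => w.
rewrite mem_walks => /andP[_ /allP]; apply; apply: map_f; rewrite mem_iota; lia.
Qed.

Hypothesis drift_lt : 2 * drift d p < 1.

Lemma P_far_event j m :
  (P (far_event j m) <= (j.+1%:R ^+ 2 * moment_const d p / (pronic m)%:R)%:E)%E.
Proof.
rewrite P_first_steps_in ?filter_uniq ?uniq_walks //; last first.
  by apply/allP => c; rewrite mem_filter => /andP[_ /size_walks ->].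
by rewrite big_filter lee_fin sum_walk_prob_ends_far.
Qed.

Lemma far_event_summable j : (\sum_(0 <= m <oo) P (far_event j m) < +oo)%E.
Proof.
set C := j.+1%:R ^+ 2 * moment_const d p.
have C_ge0 : 0 <= C.
  rewrite mulr_ge0 ?sqr_ge0 // mulr_ge0 ?ler0n // addr_ge0 // invr_ge0.
  by rewrite subr_ge0 ltW.
apply: (@le_lt_trans _ _ (\sum_(0 <= m <oo) (C / (pronic m)%:R)%:E)%E).
  by apply: lee_nneseries => // m _; exact: P_far_event.
apply: (@le_lt_trans _ _ C%:E); last exact: ltry.
apply: lime_le; first by apply: is_cvg_nneseries => m _ _; rewrite lee_fin divr_ge0 ?ler0n.
apply: nearW => N; rewrite sumEFin lee_fin -mulr_sumr sum_inv_pronic.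
by rewrite ler_piMr // lerBlDr lerDl invr_ge0 ler0n.
Qed.

Lemma ae_eventually_not_far j : {ae P, forall w, \forall m \near \oo, ~ far_event j m w}.
Proof.
exists (lim_sup_set (far_event j)); split.
- apply: bigcapT_measurable => n; apply: bigcup_measurable => m _.
  exact: measurable_far_event.
- exact: lim_sup_set_cvg0 (measurable_far_event j) (far_event_summable j).
- move=> w /= not_ev N _; apply: contrapT => not_far; apply: not_ev.
  by exists N => // m N_le far; apply: not_far; exists m.
Qed.

End Cylinders.

Theorem theorem3p1 (R : realType) (d : nat) (p : R)
  (dd : measure_display) (Omega : measurableType dd) (P : probability Omega R)
  (X : nat -> Omega -> 'cV[R]_d) :
  (1 <= d)%N -> 0 <= p -> p <= 1 ->
  p < (2 * d%:R + 1) / (4 * d%:R) ->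
  is_MERW p P X ->
  {ae P, forall w, forall i : 'I_d,
     (fun n : nat => (Spos X n w) i ord0 / n%:R) @ \oo --> (0 : R)%R}.
Proof.
move=> d_gt0 p_ge0 p_le1 /(drift_lt_half d_gt0) drift_lt X_merw.
have := ae_foralln (ae_eventually_not_far X_merw d_gt0 p_ge0 p_le1 drift_lt).
apply: filterS2 (ae_steps X_merw d_gt0 p_ge0 p_le1) => w X_steps w_not_far i.
apply: cvg_div0_of_pronic => [n|j].
  by rewrite /Spos big_nat_recr //= mxE addrC addrK norm_steps_le1.
by apply: filterS (w_not_far j) => m; exact: not_far_event_le.
Qed.
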